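(* Let $K\ge 2$ and $N\ge 1$ be integers, $g>0$, $d>0$, $x_0\in\mathbb{R}$, and consider the $K$-PAM Gaussian channel $Y=gX+W$, where $X$ takes values in $\{x_i=x_0+id: i=0,1,\dots,K-1\}$ with a probability distribution $P_X$ satisfying $P_X(x_i)>0$ for all $i$, and $W\sim\mathcal N(0,1)$ is independent of $X$; write $f(y\mid x)=\frac{1}{\sqrt{2\pi}}e^{-(y-gx)^2/2}$. Let $Z:\mathbb{R}\to\{1,\dots,N\}$ be a quantizer that maximizes the mutual information $I(X;Z(Y))$, and assume the resulting posteriors satisfy $P_{X|Z}(x\mid z)>0$ for all $x$ and all $z$ in the range of $Z$. For each such $z$ define $$S(z)=\Big\{y\in\mathbb{R}:\ \sum_{x}P_X(x)f(y\mid x)\ln P_{X|Z}(x\mid z)\ \ge\ \sum_{x}P_X(x)f(y\mid x)\ln P_{X|Z}(x\mid z')\ \text{ for all } z'\neq z \text{ in the range of } Z\Big\}$$ (the set of channel outputs assigned to $z$ by the optimality condition $Z(y)\in\arg\max_{z}\sum_x P_X(x)f(y\mid x)\ln P_{X|Z}(x\mid z)$ satisfied by capacity-maximizing quantizers). Then each $S(z)$ is a union of at most $(N-1)\lfloor\frac{K-1}{2}\rfloor+1$ pairwise disjoint intervals.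
   Context: A quantizer is any measurable map $Z:\mathbb{R}\to\{1,\dots,N\}$ applied to the channel output; $P_{X|Z}$ denotes the conditional distribution of the input given the quantized output $Z(Y)$. Intervals may be unbounded or degenerate (single points). *)

From Stdlib Require Import Reals Lra Lia Arith Classical ClassicalEpsilon.
Open Scope R_scope.

Fixpoint sumR (n : nat) (f : nat -> R) : R :=
  match n with O => 0 | S n' => sumR n' f + f n' end.

Inductive borel : (R -> Prop) -> Prop :=
| borel_interval (a b : R) : borel (fun y => a < y < b)
| borel_compl (A : R -> Prop) : borel A -> borel (fun y => ~ A y)
| borel_cunion (A : nat -> R -> Prop) :
    (forall n, borel (A n)) -> borel (fun y => exists n, A n y)
| borel_ext (A B : R -> Prop) : borel A -> (forall y, A y <-> B y) -> borel B.

Definition gauss_pdf (m y : R) : R := / sqrt (2 * PI) * exp (- (y - m) ^ 2 / 2).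

(* (b - a) * sup_{[a,b]} gauss_pdf m : the sup is attained at the point of
   [a,b] closest to m. *)
Definition gweight (m a b : R) : R := (b - a) * gauss_pdf m (Rmax a (Rmin m b)).

Definition cover_sum (m : R) (A : R -> Prop) (r : R) : Prop :=
  exists a b : nat -> R,
    (forall n, a n <= b n) /\
    (forall y, A y -> exists n, a n <= y <= b n) /\
    infinite_sum (fun n => gweight m (a n) (b n)) r.

Definition is_glb (E : R -> Prop) (v : R) : Prop :=
  (forall r, E r -> v <= r) /\ (forall l, (forall r, E r -> l <= r) -> l <= v).

(* Gaussian (outer) measure of A under N(m,1):  infimum over countable interval
   covers (Method I construction); on Borel sets this is  \int_A gauss_pdf m. *)
Definition gmeas (m : R) (A : R -> Prop) : R :=
  epsilon (inhabits 0) (fun v => is_glb (cover_sum m A) v).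

Definition is_quantizer (N : nat) (Z : R -> nat) : Prop :=
  (forall y, (1 <= Z y <= N)%nat) /\ (forall z, borel (fun y => Z y = z)).

Definition xpt (x0 d : R) (i : nat) : R := x0 + INR i * d.

Definition trans (g x0 d : R) (Z : R -> nat) (i z : nat) : R :=
  gmeas (g * xpt x0 d i) (fun y => Z y = z).

Definition pZ (K : nat) (PX : nat -> R) (g x0 d : R) (Z : R -> nat) (z : nat) : R :=
  sumR K (fun i => PX i * trans g x0 d Z i z).

(* I(X; Z(Y)); terms with trans = 0 vanish (0 * ln _ = 0). *)
Definition MI (K N : nat) (PX : nat -> R) (g x0 d : R) (Z : R -> nat) : R :=
  sumR K (fun i => sumR N (fun j =>
    PX i * trans g x0 d Z i (S j) *
      ln (trans g x0 d Z i (S j) / pZ K PX g x0 d Z (S j)))).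

Definition post (K : nat) (PX : nat -> R) (g x0 d : R) (Z : R -> nat) (i z : nat) : R :=
  PX i * trans g x0 d Z i z / pZ K PX g x0 d Z z.

Definition in_range (K N : nat) (PX : nat -> R) (g x0 d : R) (Z : R -> nat) (z : nat) : Prop :=
  (1 <= z <= N)%nat /\ 0 < pZ K PX g x0 d Z z.

Definition fch (g x y : R) : R := / sqrt (2 * PI) * exp (- (y - g * x) ^ 2 / 2).

Definition score (K : nat) (PX : nat -> R) (g x0 d : R) (Z : R -> nat) (z : nat) (y : R) : R :=
  sumR K (fun i => PX i * fch g (xpt x0 d i) y * ln (post K PX g x0 d Z i z)).

Definition Sset (K N : nat) (PX : nat -> R) (g x0 d : R) (Z : R -> nat) (z : nat) (y : R) : Prop :=
  forall z', in_range K N PX g x0 d Z z' -> z' <> z ->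
    score K PX g x0 d Z z y >= score K PX g x0 d Z z' y.

Definition is_interval (I : R -> Prop) : Prop :=
  forall a b c, I a -> I b -> a <= c <= b -> I c.

Definition union_disj_intervals (M : nat) (A : R -> Prop) : Prop :=
  exists (m : nat) (I : nat -> R -> Prop),
    (m <= M)%nat /\
    (forall k, (k < m)%nat -> is_interval (I k)) /\
    (forall k l y, (k < l < m)%nat -> I k y -> I l y -> False) /\
    (forall y, A y <-> exists k, (k < m)%nat /\ I k y).

(* For z' <> z, the difference of the scores of z and z' is a positive factor
   times an exponential sum  sum_i b_i exp (g x_i y)  with K terms.  By Rolle's
   theorem such a sum changes sign at most K - 1 times, so the set where it is
   nonnegative has at most (K - 1)/2 gaps.  S(z) is the intersection of N - 1
   such sets, hence has at most (N - 1)(K - 1)/2 gaps, and a subset of R with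
   at most M gaps is a union of at most M + 1 disjoint intervals. *)

From Stdlib Require Import Reals Lra Lia Arith List Classical ClassicalEpsilon.
Open Scope R_scope.

(* [chain A k b]: there are a_0 < c_1 < a_1 < ... < c_k < a_k = b with every
   a_i in A and every c_i outside A, i.e. A has at least k gaps below b. *)
Inductive chain (A : R -> Prop) : nat -> R -> Prop :=
| chain0 b : A b -> chain A 0 b
| chainS k a c b : chain A k a -> a < c -> c < b -> ~ A c -> A b -> chain A (S k) b.

Lemma chain_mem A k b : chain A k b -> A b.
Proof. intros H; destruct H; auto. Qed.

Lemma chain_iff A A' k b : (forall y, A y <-> A' y) -> chain A k b -> chain A' k b.
Proof.
  intros E H; induction H.
  - apply chain0; apply E; auto.
  - apply chainS with a c; auto; [intro Hc; apply H2, E | apply E]; auto.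
Qed.

Lemma chain_move_last A k a b : chain A k a -> a <= b -> A b -> chain A k b.
Proof.
  intros H Hab Hb; destruct H.
  - apply chain0; auto.
  - apply chainS with a c; auto; lra.
Qed.

Lemma chain_full A k b : (forall y, A y) -> chain A k b -> k = 0%nat.
Proof. intros HA H; destruct H; auto. exfalso; auto. Qed.

Lemma chain_shorten A k b j : chain A k b -> (j <= k)%nat -> exists b', chain A j b'.
Proof.
  intros H; revert j; induction H; intros j Hj.
  - replace j with 0%nat by lia; exists b; apply chain0; auto.
  - destruct (Nat.eq_dec j (S k)) as [->|Hne].
    + exists b; apply chainS with a c; auto.
    + apply IHchain; lia.
Qed.

Lemma chain_lt A M k b : (forall b', ~ chain A M b') -> chain A k b -> (k < M)%nat.
Proof.
  intros HA H; destruct (le_lt_dec M k) as [HMk|]; auto.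
  destruct (chain_shorten A k b M H HMk) as [b' Hb']; exfalso; apply (HA b' Hb').
Qed.

Lemma chain_conj A C k b : chain (fun y => A y /\ C y) k b ->
  exists k1 k2, k = (k1 + k2)%nat /\ chain A k1 b /\ chain C k2 b.
Proof.
  intros H; induction H as [b [Ab Cb]|k a c b _ [k1 [k2 [-> [HA HC]]]] Hac Hcb Hc [Ab Cb]].
  - exists 0%nat, 0%nat; repeat split; auto using chain0.
  - destruct (classic (A c)) as [Ac|nAc].
    + exists k1, (S k2); split; [lia|split].
      * apply chain_move_last with a; auto; lra.
      * apply chainS with a c; auto.
    + exists (S k1), k2; split; [lia|split].
      * apply chainS with a c; auto.
      * apply chain_move_last with a; auto; lra.
Qed.

Lemma chain_bigcap (B : nat -> R -> Prop) (r : nat) (l : list nat) :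
  (forall j k b, In j l -> chain (B j) k b -> (k <= r)%nat) ->
  forall k b, chain (fun y => forall j, In j l -> B j y) k b -> (k <= length l * r)%nat.
Proof.
  induction l as [|j0 l IH]; intros HB k b H; simpl.
  - apply chain_full in H; [lia|intros y j []].
  - apply chain_iff with (A' := fun y => B j0 y /\ forall j, In j l -> B j y) in H.
    + destruct (chain_conj _ _ _ _ H) as [k1 [k2 [-> [H1 H2]]]].
      assert (k1 <= r)%nat by (apply (HB j0 k1 b); simpl; auto).
      assert (k2 <= length l * r)%nat.
      { apply (IH (fun j k b Hj => HB j k b (or_intror Hj)) k2 b H2). }
      lia.
    + intros y; simpl; split.
      * intros Hy; split; auto.
      * intros [Hj0 Hy] j [<-|Hj]; auto.
Qed.

Lemma chain_impl_le (P : Prop) A r k b :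
  (P -> forall k b, chain A k b -> (k <= r)%nat) ->
  chain (fun y => P -> A y) k b -> (k <= r)%nat.
Proof.
  intros HA H; destruct (classic P) as [p|np].
  - apply (HA p k b); apply chain_iff with (2 := H); intros y; split; auto.
  - apply chain_full in H; [lia|intros y p; contradiction].
Qed.

(* Gaps of A /\ C lie between points of C, hence in C. *)
Lemma chain_restrict A C k b : is_interval C ->
  chain (fun y => A y /\ C y) k b -> chain A k b.
Proof.
  intros HC H; induction H as [b [Ab _]|k a c b Ha IH Hac Hcb Hc [Ab Cb]].
  - apply chain0; auto.
  - apply chainS with a c; auto.
    intros Ac; apply Hc; split; auto.
    apply HC with a b; [apply (chain_mem _ _ _ Ha) | auto | lra].
Qed.

Lemma chain_concat A c k1 b1 k2 b2 : ~ A c ->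
  chain (fun y => A y /\ y < c) k1 b1 -> chain (fun y => A y /\ c < y) k2 b2 ->
  chain A (k1 + k2 + 1) b2.
Proof.
  intros nAc H1 H2.
  assert (HL : chain A k1 b1).
  { apply chain_restrict with (C := fun y => y < c); auto.
    intros x y t Hx Hy Ht; lra. }
  destruct (chain_mem _ _ _ H1) as [_ Hb1c].
  induction H2 as [b [Ab Hcb]|k a g b Ha IH Hag Hgb Hg [Ab Hcb]].
  - replace (k1 + 0 + 1)%nat with (S k1) by lia.
    apply chainS with b1 c; auto.
  - replace (k1 + S k + 1)%nat with (S (k1 + k + 1)) by lia.
    destruct (chain_mem _ _ _ Ha) as [_ Hca].
    apply chainS with a g; auto.
    intros Ag; apply Hg; split; auto; lra.
Qed.

Lemma chain_length_max A M a : A a -> (forall b, ~ chain A M b) ->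
  exists k b, (k < M)%nat /\ chain A k b /\ forall b', ~ chain A (S k) b'.
Proof.
  intros Aa; induction M as [|M IH]; intros HM.
  - exfalso; apply (HM a); apply chain0; auto.
  - destruct (classic (exists b, chain A M b)) as [[b Hb]|HnM].
    + exists M, b; auto.
    + destruct IH as [k [b [Hk Hb]]].
      * intros b Hb; apply HnM; eauto.
      * exists k, b; split; [lia|auto].
Qed.

Lemma not_interval_gap A : ~ is_interval A ->
  exists a c b, A a /\ A b /\ a < c < b /\ ~ A c.
Proof.
  intros HA; apply NNPP; intros Hno; apply HA; intros a b c Aa Ab Hc.
  apply NNPP; intros nAc.
  assert (a <> c) by (intros ->; auto). assert (c <> b) by (intros ->; auto).
  apply Hno; exists a, c, b; repeat split; auto; lra.
Qed.

Lemma disj_intervals_iff M A B : (forall y, A y <-> B y) ->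
  union_disj_intervals M A -> union_disj_intervals M B.
Proof.
  intros E [m [I [Hm [HI [Hd HA]]]]]; exists m, I; repeat split; auto.
  - intros Hy; apply HA, E; auto.
  - intros Hy; apply E, HA; auto.
Qed.

Lemma disj_intervals_le M M' A : (M <= M')%nat ->
  union_disj_intervals M A -> union_disj_intervals M' A.
Proof. intros HM [m [I [Hm H]]]; exists m, I; split; auto; lia. Qed.

Lemma disj_intervals_empty A : (forall y, ~ A y) -> union_disj_intervals 0 A.
Proof.
  intros HA; exists 0%nat, (fun _ _ => False); repeat split.
  - lia.
  - intros k Hk; lia.
  - intros k l y Hkl [].
  - intros Ay; exfalso; apply (HA y Ay).
  - intros [k [Hk _]]; lia.
Qed.

Lemma disj_intervals_interval A : is_interval A -> union_disj_intervals 1 A.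
Proof.
  intros HA; exists 1%nat, (fun _ => A); repeat split; auto.
  - intros k l y Hkl; lia.
  - intros Ay; exists 0%nat; auto.
  - intros [k [_ Hk]]; auto.
Qed.

Lemma disj_intervals_split A c m1 m2 : ~ A c ->
  union_disj_intervals m1 (fun y => A y /\ y < c) ->
  union_disj_intervals m2 (fun y => A y /\ c < y) ->
  union_disj_intervals (m1 + m2) A.
Proof.
  intros nAc [n1 [I1 [Hn1 [HI1 [Hd1 HL]]]]] [n2 [I2 [Hn2 [HI2 [Hd2 HR]]]]].
  exists (n1 + n2)%nat, (fun k => if Nat.ltb k n1 then I1 k else I2 (k - n1)%nat).
  split; [lia|split; [|split]].
  - intros k Hk; destruct (Nat.ltb_spec k n1); [apply HI1 | apply HI2; lia]; auto.
  - intros k l y Hkl; destruct (Nat.ltb_spec k n1); destruct (Nat.ltb_spec l n1);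
      intros Hk Hl; try lia.
    + apply (Hd1 k l y); auto; lia.
    + destruct (proj2 (HL y) (ex_intro _ k (conj H Hk))) as [_ Hyc].
      assert (Hl' : (l - n1 < n2)%nat) by lia.
      destruct (proj2 (HR y) (ex_intro _ (l - n1)%nat (conj Hl' Hl))) as [_ Hcy].
      lra.
    + apply (Hd2 (k - n1)%nat (l - n1)%nat y); auto; lia.
  - intros y; split.
    + intros Ay; destruct (Rtotal_order y c) as [Hyc|[->|Hcy]]; [| contradiction |].
      * destruct (proj1 (HL y) (conj Ay Hyc)) as [k [Hk Iy]].
        exists k; split; [lia|]; destruct (Nat.ltb_spec k n1); auto; lia.
      * destruct (proj1 (HR y) (conj Ay Hcy)) as [k [Hk Iy]].
        exists (k + n1)%nat; split; [lia|].
        destruct (Nat.ltb_spec (k + n1) n1); [lia|].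
        replace (k + n1 - n1)%nat with k by lia; auto.
    + intros [k [Hk Iy]]; destruct (Nat.ltb_spec k n1).
      * apply HL; eauto.
      * apply HR; exists (k - n1)%nat; split; auto; lia.
Qed.

(* Cutting A at a gap c splits its gaps between the two sides, one gap being c. *)
Lemma chain_free_disj_intervals M A :
  (forall b, ~ chain A M b) -> union_disj_intervals M A.
Proof.
  revert A; induction M as [M IH] using (well_founded_induction lt_wf); intros A HA.
  destruct M as [|M].
  - apply disj_intervals_empty; intros y Ay; apply (HA y); apply chain0; auto.
  - destruct (classic (is_interval A)) as [Hi|Hni].
    + apply disj_intervals_le with 1%nat; [lia|apply disj_intervals_interval; auto].
    + destruct (not_interval_gap A Hni) as [a [c [b [Aa [Ab [[Hac Hcb] nAc]]]]]].
      set (L := fun y => A y /\ y < c). set (U := fun y => A y /\ c < y).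
      assert (HL : forall b', ~ chain L (S M) b').
      { intros b' Hb'; apply (HA b'), chain_restrict with (2 := Hb').
        intros x y t Hx Hy Ht; lra. }
      assert (HU : forall b', ~ chain U (S M) b').
      { intros b' Hb'; apply (HA b'), chain_restrict with (2 := Hb').
        intros x y t Hx Hy Ht; lra. }
      destruct (chain_length_max L (S M) a (conj Aa Hac) HL) as [k1 [b1 [_ [H1 nL]]]].
      destruct (chain_length_max U (S M) b (conj Ab Hcb) HU) as [k2 [b2 [_ [H2 nU]]]].
      assert (Hk := chain_lt A _ _ _ HA (chain_concat A c _ _ _ _ nAc H1 H2)).
      apply disj_intervals_le with (S k1 + S k2)%nat; [lia|].
      apply disj_intervals_split with c; auto; apply IH; auto; lia.
Qed.

Definition expsum (K : nat) (be la : nat -> R) (y : R) : R :=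
  sumR K (fun i => be i * exp (la i * y)).

(* [alternates G n s t]: there are t_0 < ... < t_n = t at which G is nonzero
   with strictly alternating signs, the sign at t_n being that of s. *)
Inductive alternates (G : R -> R) : nat -> R -> R -> Prop :=
| alternates0 s t : 0 < s * G t -> alternates G 0 s t
| alternatesS n s t t' : alternates G n (- s) t -> t < t' -> 0 < s * G t' ->
    alternates G (S n) s t'.

Lemma alternates_last G n s t : alternates G n s t -> 0 < s * G t.
Proof. intros H; destruct H; auto. Qed.

Lemma alternates_pos_mult G F : (forall y, exists c, 0 < c /\ F y = c * G y) ->
  forall n s t, alternates G n s t -> alternates F n s t.
Proof.
  intros HF n s t H; induction H.
  - apply alternates0; destruct (HF t) as [c [Hc ->]]; nra.
  - apply alternatesS with t; auto; destruct (HF t') as [c [Hc ->]]; nra.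
Qed.

(* Between two points where F has opposite signs, the mean value theorem gives
   a point where F' has the sign of the right one. *)
Lemma alternates_deriv F F' : (forall y, derivable_pt_lim F y (F' y)) ->
  forall n s t, alternates F (S n) s t -> exists xi, xi < t /\ alternates F' n s xi.
Proof.
  intros HD n; induction n as [|n IH]; intros s t H;
    inversion H as [|? ? t0 ? Hprev Ht0 Ht]; subst.
  - inversion Hprev as [? ? Ht0s|]; subst.
    destruct (MVT_cor2 F F' t0 t Ht0 (fun c _ => HD c)) as [xi [E Hxi]].
    exists xi; split; [lra|]; apply alternates0; nra.
  - destruct (IH (- s) t0 Hprev) as [xi0 [Hxi0 Halt0]].
    assert (L := alternates_last _ _ _ _ Hprev).
    destruct (MVT_cor2 F F' t0 t Ht0 (fun c _ => HD c)) as [xi [E Hxi]].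
    exists xi; split; [lra|]; apply alternatesS with xi0; [auto|lra|nra].
Qed.

Lemma sumR_ext n f h : (forall i, (i < n)%nat -> f i = h i) -> sumR n f = sumR n h.
Proof.
  induction n as [|n IH]; intros E; simpl; auto.
  rewrite IH, E; auto; intros; apply E; lia.
Qed.

Lemma sumR_mult_l c n f : c * sumR n f = sumR n (fun i => c * f i).
Proof. induction n as [|n IH]; simpl; [ring|rewrite <- IH; ring]. Qed.

Lemma sumR_sub n f h : sumR n f - sumR n h = sumR n (fun i => f i - h i).
Proof. induction n as [|n IH]; simpl; [ring|rewrite <- IH; ring]. Qed.

Lemma expsum_deriv K be la y :
  derivable_pt_lim (expsum K be la) y (expsum K (fun i => be i * la i) la y).
Proof.
  induction K as [|K IH]; unfold expsum; simpl.
  - apply (derivable_pt_lim_const 0 y).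
  - apply (derivable_pt_lim_plus (expsum K be la) (fun y => be K * exp (la K * y))); auto.
    replace (be K * la K * exp (la K * y)) with (be K * (exp (la K * y) * (la K * 1))) by ring.
    apply (derivable_pt_lim_scal (comp exp (mult_real_fct (la K) id))).
    apply (derivable_pt_lim_comp (mult_real_fct (la K) id) exp).
    + apply derivable_pt_lim_scal, derivable_pt_lim_id.
    + apply derivable_pt_lim_exp.
Qed.

Lemma expsum_shift K be la y :
  expsum K be (fun i => la i - la K) y + be K = exp (- la K * y) * expsum (S K) be la y.
Proof.
  unfold expsum; simpl; rewrite Rmult_plus_distr_l, sumR_mult_l; f_equal.
  - apply sumR_ext; intros i _.
    replace ((la i - la K) * y) with (la i * y + - la K * y) by ring.
    rewrite exp_plus; ring.
  - replace (exp (- la K * y) * (be K * exp (la K * y)))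
      with (be K * exp (- la K * y + la K * y)) by (rewrite exp_plus; ring).
    replace (- la K * y + la K * y) with 0 by ring; rewrite exp_0; ring.
Qed.

(* Descartes' rule for exponential sums: dividing by the last exponential and
   differentiating removes one term and, by Rolle, at most one sign change. *)
Lemma expsum_alternates_lt K be la n s t :
  alternates (expsum K be la) n s t -> (n < K)%nat.
Proof.
  revert be la n s t; induction K as [|K IH]; intros be la n s t H.
  - apply alternates_last in H; unfold expsum in H; simpl in H; lra.
  - destruct n as [|n]; [lia|].
    set (F := fun y => expsum K be (fun i => la i - la K) y + be K).
    apply alternates_pos_mult with (F := F) in H.
    2: { intros y; exists (exp (- la K * y)); split; [apply exp_pos|apply expsum_shift]. }
    assert (HD : forall y, derivable_pt_lim F y
              (expsum K (fun i => be i * (la i - la K)) (fun i => la i - la K) y)).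
    { intros y; rewrite <- (Rplus_0_r (expsum _ _ _ y)).
      apply (derivable_pt_lim_plus _ (fct_cte (be K))).
      - apply expsum_deriv.
      - apply derivable_pt_lim_const. }
    destruct (alternates_deriv F _ HD n s t H) as [xi [_ Hxi]].
    apply IH in Hxi; lia.
Qed.

Lemma expsum_bump0 n be la eps y :
  expsum (S n) (fun i => be i + (if Nat.eqb i 0 then eps else 0)) la y =
  expsum (S n) be la y + eps * exp (la 0%nat * y).
Proof.
  induction n as [|n IH]; unfold expsum in *; simpl in *; [ring|].
  rewrite IH; ring.
Qed.

(* Adding a small eps > 0 to the first coefficient makes the sum positive on
   the points of the chain while keeping it negative on its gaps. *)
Lemma chain_expsum_alternates K be la k b :
  chain (fun y => 0 <= expsum (S K) be la y) k b ->
  exists del, 0 < del /\ forall eps, 0 < eps < del ->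
    alternates (expsum (S K) (fun i => be i + (if Nat.eqb i 0 then eps else 0)) la)
      (2 * k) 1 b.
Proof.
  intros H; induction H as [b Hb|k a c b _ [d0 [Hd0 Halt]] Hac Hcb Hc Hb].
  - exists 1; split; [lra|]; intros eps Heps; apply alternates0; rewrite expsum_bump0.
    assert (0 < eps * exp (la 0%nat * b)) by (apply Rmult_lt_0_compat; [lra|apply exp_pos]).
    lra.
  - apply Rnot_le_lt in Hc.
    assert (Hec := exp_pos (la 0%nat * c)).
    set (d1 := - expsum (S K) be la c / exp (la 0%nat * c)).
    assert (Hd1 : 0 < d1) by (apply Rdiv_lt_0_compat; lra).
    exists (Rmin d0 d1); split; [apply Rmin_glb_lt; auto|].
    intros eps [Heps0 Heps].
    assert (eps < d0) by (apply Rlt_le_trans with (1 := Heps), Rmin_l).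
    assert (Hed : eps * exp (la 0%nat * c) < - expsum (S K) be la c).
    { assert (eps < d1) by (apply Rlt_le_trans with (1 := Heps), Rmin_r).
      unfold d1 in *; apply Rmult_lt_compat_r with (r := exp (la 0%nat * c)) in H0; auto.
      unfold Rdiv in H0; rewrite Rmult_assoc, Rinv_l in H0; lra. }
    assert (0 < eps * exp (la 0%nat * b)) by (apply Rmult_lt_0_compat; [lra|apply exp_pos]).
    replace (2 * S k)%nat with (S (S (2 * k))) by lia.
    apply alternatesS with c; auto; [apply alternatesS with a; auto|];
      rewrite ?Ropp_involutive, ?expsum_bump0; [apply Halt| |]; lra.
Qed.

Lemma expsum_nonneg_chain_le K be la k b : (1 <= K)%nat ->
  chain (fun y => 0 <= expsum K be la y) k b -> (k <= (K - 1) / 2)%nat.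
Proof.
  intros HK H; destruct K as [|K]; [lia|].
  destruct (chain_expsum_alternates K be la k b H) as [d [Hd Halt]].
  assert (Hlt := expsum_alternates_lt _ _ _ _ _ _ (Halt (d / 2) ltac:(lra))).
  rewrite <- (Nat.div_mul k 2) by lia; apply Nat.Div0.div_le_mono; lia.
Qed.

Lemma gauss_factor_pos y : 0 < / sqrt (2 * PI) * exp (- y ^ 2 / 2).
Proof.
  apply Rmult_lt_0_compat; [|apply exp_pos].
  apply Rinv_0_lt_compat, sqrt_lt_R0; generalize PI_RGT_0; lra.
Qed.

Definition score_coef K PX g x0 d Q z z' (i : nat) : R :=
  PX i * exp (- (g * xpt x0 d i) ^ 2 / 2) *
  (ln (post K PX g x0 d Q i z) - ln (post K PX g x0 d Q i z')).

(* Expanding (y - g x_i)^2 exhibits the score difference as a positive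
   multiple of an exponential sum with exponents g x_i. *)
Lemma score_sub K PX g x0 d Q z z' y :
  score K PX g x0 d Q z y - score K PX g x0 d Q z' y =
  (/ sqrt (2 * PI) * exp (- y ^ 2 / 2)) *
  expsum K (score_coef K PX g x0 d Q z z') (fun i => g * xpt x0 d i) y.
Proof.
  unfold score, expsum; rewrite sumR_sub, sumR_mult_l; apply sumR_ext; intros i _.
  unfold fch, score_coef; set (a := g * xpt x0 d i).
  replace (exp (- (y - a) ^ 2 / 2)) with (exp (- y ^ 2 / 2) * exp (- a ^ 2 / 2) * exp (a * y)).
  - ring.
  - rewrite <- !exp_plus; f_equal; field.
Qed.

Lemma score_ge_chain_le K PX g x0 d Q z z' k b : (1 <= K)%nat ->
  chain (fun y => score K PX g x0 d Q z y >= score K PX g x0 d Q z' y) k b ->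
  (k <= (K - 1) / 2)%nat.
Proof.
  intros HK H.
  apply (expsum_nonneg_chain_le K (score_coef K PX g x0 d Q z z')
           (fun i => g * xpt x0 d i) k b HK).
  apply chain_iff with (2 := H); intros y.
  assert (E := score_sub K PX g x0 d Q z z' y); assert (C := gauss_factor_pos y).
  split; intros Hy.
  - apply Rnot_lt_le; intros Hneg; nra.
  - nra.
Qed.

Definition others (N z : nat) : list nat := seq 1 (z - 1) ++ seq (S z) (N - z).

Lemma in_others N z z' : (z <= N)%nat ->
  In z' (others N z) <-> (1 <= z' <= N)%nat /\ z' <> z.
Proof.
  intros Hz; unfold others; rewrite in_app_iff, !in_seq; lia.
Qed.

Lemma length_others N z : (1 <= z <= N)%nat -> length (others N z) = (N - 1)%nat.
Proof. intros Hz; unfold others; rewrite length_app, !length_seq; lia. Qed.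

Lemma Sset_chain_le K N PX g x0 d Q z k b : (1 <= K)%nat -> (1 <= z <= N)%nat ->
  chain (Sset K N PX g x0 d Q z) k b -> (k <= (N - 1) * ((K - 1) / 2))%nat.
Proof.
  intros HK Hz H.
  set (B := fun z' y => in_range K N PX g x0 d Q z' ->
              score K PX g x0 d Q z y >= score K PX g x0 d Q z' y).
  rewrite <- (length_others N z Hz).
  apply (chain_bigcap B) with b.
  - intros z' k' b' _.
    apply (chain_impl_le (in_range K N PX g x0 d Q z')); intros _ k'' b''.
    apply score_ge_chain_le; auto.
  - apply chain_iff with (2 := H); intros y; unfold Sset, B; split.
    + intros Hy z' Hz' Hr; apply (in_others N z z') in Hz'; [apply Hy; tauto | lia].
    + intros Hy z' Hr Hne; apply Hy; auto.
      apply in_others; [lia | split; [apply Hr | auto]].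
Qed.

Theorem theorem1 (K N : nat) (g d x0 : R) (PX : nat -> R) (Z : R -> nat) :
  (2 <= K)%nat -> (1 <= N)%nat -> 0 < g -> 0 < d ->
  (forall i, (i < K)%nat -> 0 < PX i) ->
  sumR K PX = 1 ->
  is_quantizer N Z ->
  (forall Z', is_quantizer N Z' -> MI K N PX g x0 d Z' <= MI K N PX g x0 d Z) ->
  (forall i z, (i < K)%nat -> in_range K N PX g x0 d Z z -> 0 < post K PX g x0 d Z i z) ->
  forall z, in_range K N PX g x0 d Z z ->
    union_disj_intervals ((N - 1) * ((K - 1) / 2) + 1)
      (Sset K N PX g x0 d Z z).
Proof.
  intros HK _ _ _ _ _ _ _ _ z [Hz _].
  apply chain_free_disj_intervals; intros b Hb.
  apply Sset_chain_le in Hb; [lia | lia | auto].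
Qed.
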